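(* If $T$ is any bounded linear operator on a separable Banach space $X$, then the set $FHC(T)$ of frequently hypercyclic vectors for $T$ is meager in $X$.
   Context: $x\in FHC(T)$ if for every nonempty open $V\subset X$, $\liminf_{N\to\infty}\frac1N\#\{n\in[1,N]:T^nx\in V\}>0$. *)

From Stdlib Require Import Reals ClassicalEpsilon.
Open Scope R_scope.

Record NormedSpace := {
  ns_car :> Type;
  ns_zero : ns_car;
  ns_add : ns_car -> ns_car -> ns_car;
  ns_opp : ns_car -> ns_car;
  ns_scal : R -> ns_car -> ns_car;
  ns_norm : ns_car -> R;
  ns_addA : forall x y z, ns_add x (ns_add y z) = ns_add (ns_add x y) z;
  ns_addC : forall x y, ns_add x y = ns_add y x;
  ns_add0 : forall x, ns_add x ns_zero = x;
  ns_addN : forall x, ns_add x (ns_opp x) = ns_zero;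
  ns_scalA : forall a b x, ns_scal a (ns_scal b x) = ns_scal (a * b) x;
  ns_scal1 : forall x, ns_scal 1 x = x;
  ns_scalDr : forall a x y, ns_scal a (ns_add x y) = ns_add (ns_scal a x) (ns_scal a y);
  ns_scalDl : forall a b x, ns_scal (a + b) x = ns_add (ns_scal a x) (ns_scal b x);
  ns_norm_eq0 : forall x, ns_norm x = 0 -> x = ns_zero;
  ns_norm0 : ns_norm ns_zero = 0;
  ns_normZ : forall a x, ns_norm (ns_scal a x) = Rabs a * ns_norm x;
  ns_normD : forall x y, ns_norm (ns_add x y) <= ns_norm x + ns_norm y
}.

Section Topology.
Variable X : NormedSpace.

Definition dist (x y : X) : R := ns_norm X (ns_add X x (ns_opp X y)).

Definition cauchy (u : nat -> X) : Prop :=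
  forall eps, 0 < eps -> exists N, forall m n, (N <= m)%nat -> (N <= n)%nat ->
    dist (u m) (u n) < eps.

Definition converges_to (u : nat -> X) (l : X) : Prop :=
  forall eps, 0 < eps -> exists N, forall n, (N <= n)%nat -> dist (u n) l < eps.

Definition complete : Prop :=
  forall u, cauchy u -> exists l, converges_to u l.

Definition separable : Prop :=
  exists d : nat -> X, forall x eps, 0 < eps -> exists n, dist x (d n) < eps.

Definition is_open (V : X -> Prop) : Prop :=
  forall x, V x -> exists eps, 0 < eps /\ forall y, dist y x < eps -> V y.

Definition closure (A : X -> Prop) (x : X) : Prop :=
  forall eps, 0 < eps -> exists y, A y /\ dist x y < eps.

Definition nowhere_dense (A : X -> Prop) : Prop :=
  forall U, is_open U -> (forall x, U x -> closure A x) -> forall x, ~ U x.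

Definition meager (A : X -> Prop) : Prop :=
  exists F : nat -> (X -> Prop),
    (forall n, nowhere_dense (F n)) /\ (forall x, A x -> exists n, F n x).

Definition bounded_linear (T : X -> X) : Prop :=
  (forall x y, T (ns_add X x y) = ns_add X (T x) (T y)) /\
  (forall a x, T (ns_scal X a x) = ns_scal X a (T x)) /\
  (exists M, forall x, ns_norm X (T x) <= M * ns_norm X x).

Fixpoint visit_count (T : X -> X) (x : X) (V : X -> Prop) (N : nat) : nat :=
  match N with
  | O => O
  | S N' => (visit_count T x V N' +
             if excluded_middle_informative (V (Nat.iter N T x)) then 1 else 0)%nat
  end.

Definition liminf_pos (u : nat -> R) : Prop :=
  exists c, 0 < c /\ exists N0, forall N, (N0 <= N)%nat -> c <= u N.

Definition FHC (T : X -> X) (x : X) : Prop :=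
  forall V, is_open V -> (exists v, V v) ->
    liminf_pos (fun N => INR (visit_count T x V N) / INR N).

End Topology.

(* If some x0 is frequently hypercyclic, its orbit is dense.  Fix c <> 0 and the closed ball
   C = B(c, |c|/2); the balls 4^i C are pairwise disjoint.  Every frequently hypercyclic vector
   visits C with lower density at least 1/m from time m on, for some m, and the set A_m of such
   vectors is closed because T is continuous and C is closed.  If A_m contained a nonempty open
   set U, the dense orbit of x0 would enter each of 4^0 U, ..., 4^m U, and hence (by homogeneity of
   T) eventually visit each of the m + 1 disjoint sets 4^i C with density at least 1/m: a total
   density (m + 1)/m > 1.  So FHC(T) is covered by the nowhere dense sets A_m. *)

From Pilot Require Import Defs.
From Stdlib Require Import Reals Lra Lia ClassicalEpsilon.
Import Defs. (* [Reals] also exports a [dist]; this re-exposes the one of [Defs]. *)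
Open Scope R_scope.

Section NormedSpaceFacts.
Variable X : NormedSpace.

Lemma ns_opp_unique (v w : X) : ns_add X v w = ns_zero X -> w = ns_opp X v.
Proof.
  intro H.
  rewrite <- (ns_add0 X w), <- (ns_addN X v), ns_addA, (ns_addC X w v), H.
  rewrite ns_addC; apply ns_add0.
Qed.

Lemma ns_add_self_eq (u : X) : ns_add X u u = u -> u = ns_zero X.
Proof.
  intro H. transitivity (ns_add X (ns_add X u u) (ns_opp X u)).
  - rewrite <- ns_addA, ns_addN, ns_add0. reflexivity.
  - rewrite H. apply ns_addN.
Qed.

Lemma ns_scalr0 a : ns_scal X a (ns_zero X) = ns_zero X.
Proof. apply ns_add_self_eq. rewrite <- ns_scalDr, ns_add0. reflexivity. Qed.

Lemma ns_scal0l (x : X) : ns_scal X 0 x = ns_zero X.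
Proof. apply ns_add_self_eq. rewrite <- ns_scalDl, Rplus_0_l. reflexivity. Qed.

Lemma ns_scalN a (y : X) : ns_scal X a (ns_opp X y) = ns_opp X (ns_scal X a y).
Proof. apply ns_opp_unique. rewrite <- ns_scalDr, ns_addN. apply ns_scalr0. Qed.

Lemma ns_oppE (x : X) : ns_opp X x = ns_scal X (-1) x.
Proof.
  symmetry; apply ns_opp_unique.
  rewrite <- (ns_scal1 X x) at 1. rewrite <- ns_scalDl.
  replace (1 + -1) with 0 by ring. apply ns_scal0l.
Qed.

Lemma ns_normN (x : X) : ns_norm X (ns_opp X x) = ns_norm X x.
Proof. rewrite ns_oppE, ns_normZ, Rabs_left by lra. ring. Qed.

Lemma ns_norm_ge0 (x : X) : 0 <= ns_norm X x.
Proof.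
  pose proof (ns_normD X x (ns_opp X x)) as H.
  rewrite ns_addN, ns_norm0, ns_normN in H. lra.
Qed.

Lemma ns_sub_telescope (a b c : X) :
  ns_add X (ns_add X a (ns_opp X b)) (ns_add X b (ns_opp X c)) = ns_add X a (ns_opp X c).
Proof.
  rewrite <- ns_addA. f_equal. rewrite ns_addA, (ns_addC X (ns_opp X b) b), ns_addN.
  rewrite ns_addC; apply ns_add0.
Qed.

Lemma dist_triangle (a b c : X) : dist X a c <= dist X a b + dist X b c.
Proof. unfold dist. rewrite <- (ns_sub_telescope a b c). apply ns_normD. Qed.

Lemma dist_sym (a b : X) : dist X a b = dist X b a.
Proof.
  unfold dist. rewrite <- (ns_normN (ns_add X b (ns_opp X a))). f_equal.
  apply ns_opp_unique. rewrite ns_sub_telescope. apply ns_addN.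
Qed.

Lemma dist_refl (a : X) : dist X a a = 0.
Proof. unfold dist. rewrite ns_addN. apply ns_norm0. Qed.

Lemma norm_le_dist_norm (w c : X) : ns_norm X w <= dist X w c + ns_norm X c.
Proof.
  unfold dist. rewrite <- ns_normD. right. f_equal.
  rewrite <- ns_addA, (ns_addC X (ns_opp X c) c), ns_addN, ns_add0. reflexivity.
Qed.

Lemma dist_scal a (x y : X) : dist X (ns_scal X a x) (ns_scal X a y) = Rabs a * dist X x y.
Proof. unfold dist. rewrite <- ns_scalN, <- ns_scalDr, ns_normZ. reflexivity. Qed.

Lemma is_open_scal_preimage (U : X -> Prop) a :
  a <> 0 -> is_open X U -> is_open X (fun y => U (ns_scal X a y)).
Proof.
  intros Ha HU y Hy. destruct (HU _ Hy) as [eps [Heps HUeps]].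
  assert (Hpos : 0 < Rabs a) by (apply Rabs_pos_lt; exact Ha).
  exists (eps / Rabs a). split; [apply Rdiv_lt_0_compat; assumption|].
  intros w Hw. apply HUeps. rewrite dist_scal.
  apply Rmult_lt_reg_l with (/ Rabs a); [apply Rinv_0_lt_compat; exact Hpos|].
  rewrite <- Rmult_assoc, Rinv_l, Rmult_1_l by lra. lra.
Qed.

(* The balls of radius [4^i |c| / 2] around [4^i c] lie in disjoint annuli. *)
Lemma scaled_balls_disjoint (c y : X) i j :
  0 < ns_norm X c -> (i < j)%nat ->
  dist X (ns_scal X (/ 4 ^ i) y) c <= ns_norm X c / 2 ->
  dist X (ns_scal X (/ 4 ^ j) y) c <= ns_norm X c / 2 -> False.
Proof.
  intros Hc Hij Hi Hj.
  pose proof (norm_le_dist_norm (ns_scal X (/ 4 ^ i) y) c) as Hup.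
  pose proof (norm_le_dist_norm c (ns_scal X (/ 4 ^ j) y)) as Hlow.
  rewrite dist_sym in Hlow. rewrite ns_normZ in Hup, Hlow.
  assert (P1 : 0 < 4 ^ i) by (apply pow_lt; lra).
  assert (P2 : 0 < 4 ^ j) by (apply pow_lt; lra).
  rewrite Rabs_right in Hup, Hlow by (left; apply Rinv_0_lt_compat; lra).
  set (s := ns_norm X y) in *. set (p := ns_norm X c) in *.
  assert (B1 : s <= 3 * p / 2 * 4 ^ i).
  { apply Rmult_le_reg_l with (/ 4 ^ i); [apply Rinv_0_lt_compat; lra|].
    replace (/ 4 ^ i * (3 * p / 2 * 4 ^ i)) with (3 * p / 2) by (field; lra). lra. }
  assert (B2 : p / 2 * 4 ^ j <= s).
  { apply Rmult_le_reg_l with (/ 4 ^ j); [apply Rinv_0_lt_compat; lra|].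
    replace (/ 4 ^ j * (p / 2 * 4 ^ j)) with (p / 2) by (field; lra). lra. }
  assert (4 * 4 ^ i <= 4 ^ j) by (change (4 ^ S i <= 4 ^ j); apply Rle_pow; lra || lia).
  nra.
Qed.

Lemma is_open_ball (c : X) r : is_open X (fun z => dist X z c < r).
Proof.
  intros y Hy. exists (r - dist X y c). split; [lra|].
  intros w Hw. pose proof (dist_triangle w y c). lra.
Qed.

Lemma is_open_closed_ball_compl (c : X) r : is_open X (fun z => ~ dist X z c <= r).
Proof.
  intros y Hy. exists (dist X y c - r). split; [lra|].
  intros w Hw Hwc. pose proof (dist_triangle y w c). rewrite dist_sym in Hw. lra.
Qed.

Definition continuous_map (f : X -> X) : Prop :=
  forall x eps, 0 < eps ->
    exists del, 0 < del /\ forall y, dist X x y < del -> dist X (f x) (f y) < eps.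

Lemma continuous_map_comp (f g : X -> X) :
  continuous_map f -> continuous_map g -> continuous_map (fun x => f (g x)).
Proof.
  intros Hf Hg x eps Heps.
  destruct (Hf (g x) eps Heps) as [d1 [Hd1 H1]].
  destruct (Hg x d1 Hd1) as [d2 [Hd2 H2]].
  exists d2. split; [exact Hd2|]. intros y Hy. apply H1, H2, Hy.
Qed.

Lemma continuous_map_iter (f : X -> X) j :
  continuous_map f -> continuous_map (Nat.iter j f).
Proof.
  intro Hf. induction j as [|j IH]; simpl.
  - intros x eps Heps. exists eps. split; [exact Heps|]. tauto.
  - exact (continuous_map_comp f (Nat.iter j f) Hf IH).
Qed.

Lemma bounded_linear_continuous (T : X -> X) : bounded_linear X T -> continuous_map T.
Proof.
  intros [Hadd [Hscal [M HM]]] x eps Heps.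
  assert (Hdist : forall y, dist X (T x) (T y) <= M * dist X x y).
  { intro y. unfold dist. rewrite ns_oppE, <- Hscal, <- Hadd, <- ns_oppE. apply HM. }
  set (K := Rabs M + 1).
  assert (HK : 0 < K) by (unfold K; pose proof (Rabs_pos M); lra).
  exists (eps / K). split; [apply Rdiv_lt_0_compat; assumption|].
  intros y Hy.
  assert (M * dist X x y <= K * dist X x y).
  { pose proof (ns_norm_ge0 (ns_add X x (ns_opp X y))). pose proof (Rle_abs M).
    unfold K, dist in *. nra. }
  assert (K * dist X x y < eps).
  { apply Rmult_lt_reg_l with (/ K); [apply Rinv_0_lt_compat; exact HK|].
    rewrite <- Rmult_assoc, Rinv_l, Rmult_1_l by lra. lra. }
  pose proof (Hdist y). lra.
Qed.

End NormedSpaceFacts.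

Section VisitCounts.
Variables (X : NormedSpace) (T : X -> X).

Definition indicator (P : Prop) : nat :=
  if excluded_middle_informative P then 1%nat else 0%nat.

Lemma indicator_le (P Q : Prop) : (P -> Q) -> (indicator P <= indicator Q)%nat.
Proof.
  unfold indicator; intro H; destruct (excluded_middle_informative P);
  destruct (excluded_middle_informative Q); intuition lia.
Qed.

Lemma indicator_le1 (P : Prop) : (indicator P <= 1)%nat.
Proof. unfold indicator; destruct (excluded_middle_informative P); lia. Qed.

Lemma indicator_or_disjoint (P Q : Prop) :
  (P -> Q -> False) -> indicator (P \/ Q) = (indicator P + indicator Q)%nat.
Proof.
  unfold indicator; intro H; destruct (excluded_middle_informative (P \/ Q));
  destruct (excluded_middle_informative P); destruct (excluded_middle_informative Q);
  intuition lia.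
Qed.

Lemma visit_count_S (x : X) V N :
  visit_count X T x V (S N) = (visit_count X T x V N + indicator (V (Nat.iter (S N) T x)))%nat.
Proof. reflexivity. Qed.

Lemma visit_count_le (x : X) V N : (visit_count X T x V N <= N)%nat.
Proof.
  induction N as [|N IH]; [simpl; lia|].
  rewrite visit_count_S. pose proof (indicator_le1 (V (Nat.iter (S N) T x))). lia.
Qed.

Lemma visit_count_mono (x : X) (P Q : X -> Prop) N :
  (forall z, P z -> Q z) -> (visit_count X T x P N <= visit_count X T x Q N)%nat.
Proof.
  intro H; induction N as [|N IH]; [simpl; lia|]. rewrite !visit_count_S.
  pose proof (indicator_le _ _ (H (Nat.iter (S N) T x))). lia.
Qed.

Lemma visit_count_orbit_ext (x y : X) (P Q : X -> Prop) N :
  (forall j, P (Nat.iter j T x) <-> Q (Nat.iter j T y)) ->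
  visit_count X T x P N = visit_count X T y Q N.
Proof.
  intro H; induction N as [|N IH]; [reflexivity|]. rewrite !visit_count_S, IH. f_equal.
  apply Nat.le_antisymm; apply indicator_le; apply H.
Qed.

Lemma visit_count_ext (x : X) (P Q : X -> Prop) N :
  (forall z, P z <-> Q z) -> visit_count X T x P N = visit_count X T x Q N.
Proof. intro H. apply visit_count_orbit_ext. intro; apply H. Qed.

Lemma visit_count_shift (x : X) P N e :
  visit_count X T x P (N + e) =
  (visit_count X T x P e + visit_count X T (Nat.iter e T x) P N)%nat.
Proof.
  induction N as [|N IH]; [simpl; lia|].
  change (S N + e)%nat with (S (N + e)). rewrite !visit_count_S, IH, <- Nat.iter_add.
  change (S N + e)%nat with (S (N + e)). lia.
Qed.

Lemma visit_count_pos (x : X) P N :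
  (0 < visit_count X T x P N)%nat -> exists j, P (Nat.iter j T x).
Proof.
  induction N as [|N IH]; simpl; [lia|]. unfold indicator.
  destruct (excluded_middle_informative (P (T (Nat.iter N T x)))) as [Hp|Hp].
  - intros _. exists (S N). exact Hp.
  - intro; apply IH; lia.
Qed.

Lemma visit_count_union_disjoint (x : X) (A B : X -> Prop) N :
  (forall y, A y -> B y -> False) ->
  visit_count X T x (fun y => A y \/ B y) N = (visit_count X T x A N + visit_count X T x B N)%nat.
Proof.
  intro H; induction N as [|N IH]; [reflexivity|].
  rewrite !visit_count_S, IH, indicator_or_disjoint by apply H. lia.
Qed.

Fixpoint sum_upto (f : nat -> nat) (k : nat) : nat :=
  match k with O => f O | S k' => (sum_upto f k' + f (S k'))%nat end.

Lemma sum_upto_mul m f k : sum_upto (fun i => m * f i)%nat k = (m * sum_upto f k)%nat.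
Proof. induction k as [|k IH]; simpl; [reflexivity|]. rewrite IH; lia. Qed.

Lemma sum_upto_ge (f : nat -> nat) a k :
  (forall i, (i <= k)%nat -> (a <= f i)%nat) -> (S k * a <= sum_upto f k)%nat.
Proof.
  induction k as [|k IH]; simpl; intro H; [specialize (H O); lia|].
  assert (a <= f (S k))%nat by (apply H; lia).
  assert (S k * a <= sum_upto f k)%nat by (apply IH; intros; apply H; lia).
  simpl in *. lia.
Qed.

Lemma sum_visit_count_disjoint (x : X) (D : nat -> X -> Prop) k N :
  (forall i j y, (i < j <= k)%nat -> D i y -> D j y -> False) ->
  sum_upto (fun i => visit_count X T x (D i) N) k =
  visit_count X T x (fun y => exists i, (i <= k)%nat /\ D i y) N.
Proof.
  induction k as [|k IH]; simpl; intro H.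
  - apply visit_count_ext. intro y. split; [exists O; split; [lia|assumption]|].
    intros [i [Hi Hy]]. replace O with i by lia. exact Hy.
  - rewrite IH by (intros i j y Hij; apply H; lia).
    rewrite <- visit_count_union_disjoint.
    + apply visit_count_ext. intro y. split.
      * intros [[i [Hi Hy]]|Hy]; [exists i; split; [lia|exact Hy]|exists (S k); auto].
      * intros [i [Hi Hy]]. destruct (Nat.eq_dec i (S k)) as [->|]; [right; exact Hy|].
        left; exists i; split; [lia|exact Hy].
    + intros y [i [Hi Hy]] Hk. apply (H i (S k) y); [lia|assumption|assumption].
Qed.

End VisitCounts.

Section FrequentVisitors.
Variables (X : NormedSpace) (T : X -> X).

Definition frequent_visitor (C : X -> Prop) (m : nat) (x : X) : Prop :=
  forall N, (m <= N)%nat -> (N <= m * visit_count X T x C N)%nat.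

Definition dense_orbit (x : X) : Prop :=
  forall O, is_open X O -> (exists v, O v) -> exists e, O (Nat.iter e T x).

Lemma liminf_pos_frequent_visitor (x : X) V :
  liminf_pos (fun N => INR (visit_count X T x V N) / INR N) ->
  exists m, frequent_visitor V m x.
Proof.
  intros [c [Hc [N0 HN0]]].
  destruct (INR_archimed c 1 Hc) as [k Hk].
  exists (Nat.max k (Nat.max N0 1)). intros N HN.
  specialize (HN0 N ltac:(lia)).
  assert (HNpos : 0 < INR N) by (apply lt_0_INR; lia).
  set (v := visit_count X T x V N) in *.
  assert (Hcv : c * INR N <= INR v).
  { apply Rmult_le_reg_r with (/ INR N); [apply Rinv_0_lt_compat; exact HNpos|].
    rewrite Rmult_assoc, Rinv_r, Rmult_1_r by lra. exact HN0. }
  assert (Hkm : INR k <= INR (Nat.max k (Nat.max N0 1))) by (apply le_INR; lia).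
  assert (INR N < INR (Nat.max k (Nat.max N0 1) * v)).
  { rewrite mult_INR. pose proof (pos_INR v). pose proof (pos_INR k). nra. }
  apply INR_lt in H. lia.
Qed.

Lemma FHC_dense_orbit (x : X) : FHC X T x -> dense_orbit x.
Proof.
  intros Hx O HO HOne. destruct (Hx O HO HOne) as [c [Hc [N0 HN0]]].
  specialize (HN0 (S N0) ltac:(lia)).
  apply (visit_count_pos X T x O (S N0)).
  destruct (visit_count X T x O (S N0)); [|lia].
  simpl in HN0. unfold Rdiv in HN0. rewrite Rmult_0_l in HN0. lra.
Qed.

Lemma frequent_visitor_mono (C C' : X -> Prop) m (x : X) :
  (forall z, C z -> C' z) -> frequent_visitor C m x -> frequent_visitor C' m x.
Proof.
  intros HCC' Hfreq N HN. specialize (Hfreq N HN).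
  pose proof (visit_count_mono X T x C C' N HCC'). nia.
Qed.

Lemma frequent_visitor_iter (C : X -> Prop) m e (x : X) L :
  frequent_visitor C m (Nat.iter e T x) -> (m + e <= L)%nat ->
  (L - e <= m * visit_count X T x C L)%nat.
Proof.
  intros Hfreq HL.
  pose proof (Hfreq (L - e)%nat ltac:(lia)) as Hlate.
  pose proof (visit_count_shift X T x C (L - e) e) as Hsplit.
  replace (L - e + e)%nat with L in Hsplit by lia.
  rewrite Hsplit. nia.
Qed.

Lemma frequent_visitor_scal (C : X -> Prop) m a (x : X) :
  (forall b y, T (ns_scal X b y) = ns_scal X b (T y)) ->
  frequent_visitor C m (ns_scal X a x) ->
  frequent_visitor (fun y => C (ns_scal X a y)) m x.
Proof.
  intros Hhom Hfreq N HN. specialize (Hfreq N HN).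
  erewrite visit_count_orbit_ext in Hfreq; [exact Hfreq|].
  intro j. assert (Hj : Nat.iter j T (ns_scal X a x) = ns_scal X a (Nat.iter j T x)).
  { induction j as [|j IH]; simpl; [reflexivity|]. rewrite IH. apply Hhom. }
  rewrite Hj. tauto.
Qed.

Lemma visit_count_locally_le (C : X -> Prop) :
  continuous_map X T -> is_open X (fun z => ~ C z) ->
  forall N x, exists eps, 0 < eps /\
    forall y, dist X x y < eps -> (visit_count X T y C N <= visit_count X T x C N)%nat.
Proof.
  intros HT HC. induction N as [|N IH]; intro x.
  - exists 1. split; [lra|]. intros; simpl; lia.
  - destruct (IH x) as [e1 [He1 H1]].
    destruct (classic (C (Nat.iter (S N) T x))) as [Hin|Hout].
    + exists e1. split; [exact He1|]. intros y Hy. rewrite !visit_count_S.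
      specialize (H1 y Hy). pose proof (indicator_le1 (C (Nat.iter (S N) T y))).
      unfold indicator at 2. destruct (excluded_middle_informative _); [lia|tauto].
    + destruct (HC _ Hout) as [e2 [He2 H2]].
      destruct (continuous_map_iter X T (S N) HT x e2 He2) as [e3 [He3 H3]].
      exists (Rmin e1 e3). split; [apply Rmin_pos; assumption|].
      intros y Hy. rewrite !visit_count_S.
      specialize (H1 y (Rlt_le_trans _ _ _ Hy (Rmin_l _ _))).
      assert (Hyout : ~ C (Nat.iter (S N) T y)).
      { apply H2. rewrite dist_sym. apply H3. exact (Rlt_le_trans _ _ _ Hy (Rmin_r _ _)). }
      unfold indicator. do 2 destruct (excluded_middle_informative _); tauto || lia.
Qed.

Lemma frequent_visitor_closed (C : X -> Prop) m x :
  continuous_map X T -> is_open X (fun z => ~ C z) ->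
  closure X (frequent_visitor C m) x -> frequent_visitor C m x.
Proof.
  intros HT HC Hcl N HN.
  destruct (visit_count_locally_le C HT HC N x) as [e [He H]].
  destruct (Hcl e He) as [y [Hy Hxy]].
  specialize (H y Hxy). specialize (Hy N HN). nia.
Qed.

End FrequentVisitors.

Lemma bounded_witnesses (P : nat -> nat -> Prop) k :
  (forall i, exists e, P i e) ->
  exists E, forall i, (i <= k)%nat -> exists e, (e <= E)%nat /\ P i e.
Proof.
  intro H. induction k as [|k [E HE]].
  - destruct (H O) as [e He]. exists e. intros i Hi. replace i with O by lia. eauto.
  - destruct (H (S k)) as [e He]. exists (Nat.max E e). intros i Hi.
    destruct (Nat.eq_dec i (S k)) as [->|Hik].
    + exists e. split; [lia|exact He].
    + destruct (HE i ltac:(lia)) as [e' [He' Pe']]. exists e'. split; [lia|exact Pe'].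
Qed.

Section NowhereDense.
Variables (X : NormedSpace) (T : X -> X) (x0 c : X).
Hypothesis T_continuous : continuous_map X T.
Hypothesis T_homogeneous : forall a y, T (ns_scal X a y) = ns_scal X a (T y).
Hypothesis x0_dense_orbit : dense_orbit X T x0.
Hypothesis c_neq0 : 0 < ns_norm X c.

Let ball_c (z : X) : Prop := dist X z c <= ns_norm X c / 2.

Lemma frequent_visitor_ball_interior_empty m (U : X -> Prop) u :
  is_open X U -> (forall x, U x -> frequent_visitor X T ball_c m x) -> ~ U u.
Proof.
  intros HU HUfreq Hu.
  set (D i := fun y => ball_c (ns_scal X (/ 4 ^ i) y)).
  assert (Hvisit : forall i, exists e, U (ns_scal X (/ 4 ^ i) (Nat.iter e T x0))).
  { intro i. assert (H4 : 4 ^ i <> 0) by (apply pow_nonzero; lra). apply (x0_dense_orbit (fun y => U (ns_scal X (/ 4 ^ i) y))).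
    - apply is_open_scal_preimage; [apply Rinv_neq_0_compat|]; assumption.
    - exists (ns_scal X (4 ^ i) u). rewrite ns_scalA, Rinv_l, ns_scal1 by exact H4. exact Hu. }
  destruct (bounded_witnesses _ m Hvisit) as [E HE].
  set (L := (S m * S E)%nat).
  set (count i := visit_count X T x0 (D i) L).
  assert (Hlow : forall i, (i <= m)%nat -> (L - E <= m * count i)%nat).
  { intros i Hi. destruct (HE i Hi) as [e [He HUe]].
    pose proof (frequent_visitor_iter X T (D i) m e x0 L
      (frequent_visitor_scal X T ball_c m _ _ T_homogeneous (HUfreq _ HUe))
      ltac:(unfold L; nia)).
    unfold count. nia. }
  pose proof (sum_upto_ge (fun i => m * count i)%nat (L - E) m Hlow) as Hsum.
  rewrite sum_upto_mul in Hsum. unfold count in Hsum.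
  rewrite sum_visit_count_disjoint in Hsum.
  - (* [m + 1] disjoint sets, each visited with density at least [1/m] *)
    pose proof (visit_count_le X T x0 (fun y => exists i, (i <= m)%nat /\ D i y) L).
    unfold L in *. nia.
  - intros i j y [Hij _]. exact (scaled_balls_disjoint X c y i j c_neq0 Hij).
Qed.

Lemma frequent_visitor_ball_nowhere_dense m :
  nowhere_dense X (frequent_visitor X T ball_c m).
Proof.
  intros U HU Hsub u. apply (frequent_visitor_ball_interior_empty m U u HU).
  intros x Hx. apply frequent_visitor_closed; [exact T_continuous| |exact (Hsub x Hx)].
  apply is_open_closed_ball_compl.
Qed.

End NowhereDense.

Lemma FHC_frequent_visitor_ball (X : NormedSpace) (T : X -> X) (c x : X) :
  0 < ns_norm X c -> FHC X T x ->
  exists m, frequent_visitor X T (fun z => dist X z c <= ns_norm X c / 2) m x.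
Proof.
  intros Hc Hx.
  set (V := fun z => dist X z c < ns_norm X c / 2).
  assert (HVne : exists v, V v) by (exists c; unfold V; rewrite dist_refl; lra).
  destruct (liminf_pos_frequent_visitor X T x V (Hx V (is_open_ball X c _) HVne)) as [m Hm].
  exists m. apply (frequent_visitor_mono X T V); [|exact Hm].
  intros z Hz. unfold V in Hz. lra.
Qed.

Theorem proposition4 (X : NormedSpace)
  (HX : complete X) (Hsep : separable X) (Hnontriv : exists x : X, x <> ns_zero X)
  (T : X -> X) (HT : bounded_linear X T) :
  meager X (FHC X T).
Proof.
  destruct Hnontriv as [c Hc0].
  assert (Hc : 0 < ns_norm X c).
  { destruct (ns_norm_ge0 X c) as [H|H]; [exact H|].
    exfalso. apply Hc0, ns_norm_eq0. symmetry. exact H. }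
  destruct (classic (exists x0, FHC X T x0)) as [[x0 Hx0]|HnoFHC].
  - exists (frequent_visitor X T (fun z => dist X z c <= ns_norm X c / 2)). split.
    + intro m. apply (frequent_visitor_ball_nowhere_dense X T x0 c).
      * exact (bounded_linear_continuous X T HT).
      * destruct HT as [_ [Hhom _]]. exact Hhom.
      * exact (FHC_dense_orbit X T x0 Hx0).
      * exact Hc.
    + intros x Hx. exact (FHC_frequent_visitor_ball X T c x Hc Hx).
  - exists (fun _ _ => False). split.
    + intros n U HU Hsub x Hx. destruct (Hsub x Hx 1 Rlt_0_1) as [y [[] _]].
    + intros x Hx. exfalso. eauto.
Qed.
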